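(* Let $m\ge 3$ and let $T_m$ be the graph defined below. The multiplicity of $1$ as an eigenvalue of $T_m$ equals the number of pairs $(j,\ell)\in\{0,\dots,m-1\}^2$ satisfying \[ \cos\tfrac{2\pi j}{m}+\cos\tfrac{2\pi \ell}{m}=2\cos\tfrac{2\pi j}{m}\cos\tfrac{2\pi \ell}{m}. \]
   Context: For $m\ge3$, $T_m$ is the cubic graph on $2m^2$ vertices $\{x^+_{i,j},\,x^-_{i,j}\mid i,j\in\mathbb{Z}_m\}$ with edges $\{x^+_{i,j},x^+_{i,j+1}\}$, $\{x^-_{i,j},x^-_{i,j+1}\}$ and $\{x^+_{i,j},x^-_{j,i}\}$ for all $i,j\in\mathbb{Z}_m$. Eigenvalues are those of the adjacency matrix. *)

From HB Require Import structures.
From mathcomp Require Import all_boot all_order all_algebra.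
From mathcomp Require Import all_classical all_reals all_analysis.
Set Implicit Arguments. Unset Strict Implicit. Unset Printing Implicit Defensive.
Import Order.TTheory GRing.Theory Num.Theory.
Local Open Scope ring_scope.

(* Vertices of T_m: (true, i, j) = x^+_{i,j}, (false, i, j) = x^-_{i,j},
   with i, j in Z_m represented by 'I_m. *)
Definition Tvert (m : nat) : finType := (bool * 'I_m * 'I_m)%type.

Definition Tadj (m : nat) (u v : Tvert m) : bool :=
  let: (s, i, j) := u in
  let: (t, k, l) := v in
  if s == t then
    (i == k) && (((j.+1 %% m)%N == l :> nat) || ((l.+1 %% m)%N == j :> nat))
  else
    (k == j) && (l == i).

Definition Tadjmx (R : realType) (m : nat) : 'M[R]_#|Tvert m| :=
  \matrix_(a, b) ((Tadj (enum_val a) (enum_val b) : nat)%:R).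

Definition eig_mult (R : realType) (n : nat) (A : 'M[R]_n) (x : R) : nat :=
  mup x (char_poly A).

(* Let a_j = 2 cos (2 pi j / m) be the eigenvalues of the m-cycle, whose eigenvectors are
   the powers of w = exp (2 i pi / m).  For each pair (j, l) the functions
   x^+_{i,k} |-> w^(j i + l k) and x^-_{i,k} |-> w^(j k + l i) span a subspace on which the
   adjacency operator of T_m acts as the matrix [[a_l, 1], [1, a_j]]; its two eigenvalues
   lambda satisfy (lambda - a_l) (lambda - a_j) = 1.  The resulting 2 m^2 eigenvectors are
   linearly independent by orthogonality of the characters of Z_m x Z_m, so they
   diagonalize T_m.  The discriminant (a_l - a_j)^2 + 4 is positive, so lambda = 1 occurs at
   most once for each pair, namely when a_j a_l = a_j + a_l, which is the cosine identity. *)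

From HB Require Import structures.
From mathcomp Require Import all_boot all_order all_algebra.
From mathcomp Require Import all_classical all_reals all_analysis.
From mathcomp Require Import complex.
From mathcomp Require Import ring lra zify.
Import Order.TTheory GRing.Theory Num.Theory.
Local Open Scope ring_scope.
Set Implicit Arguments. Unset Strict Implicit. Unset Printing Implicit Defensive.

Section UnityRoots.
Variables (F : fieldType) (n : nat).

Lemma unity_root_sum_eq0 (z : F) :
  z ^+ n = 1 -> z != 1 -> \sum_(i < n) z ^+ i = 0.
Proof.
move=> zn1 z_neq1; have := subrX1 z n; rewrite zn1 subrr => /esym/eqP.
by rewrite mulf_eq0 subr_eq0 (negPf z_neq1) => /eqP.
Qed.

Lemma expr_ordS (z : F) (k : 'I_n) : z ^+ n = 1 -> z ^+ ordS k = z ^+ k * z.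
Proof. by move=> zn1; rewrite /= expr_mod // exprSr. Qed.

Lemma expr_ord_pred (z : F) (k : 'I_n) : z ^+ n = 1 -> z ^+ ord_pred k = z ^+ k / z.
Proof.
move=> zn1; have n_gt0 : (0 < n)%N by apply: leq_ltn_trans (ltn_ord k).
have z_neq0 : z != 0.
  by apply/eqP => z0; move: zn1; rewrite z0 expr0n gtn_eqF // => /esym/eqP; rewrite oner_eq0.
rewrite /= expr_mod //; apply: (mulIf z_neq0).
by rewrite divfK // -exprSr prednK ?addn_gt0 ?n_gt0 ?orbT // exprD zn1 mulr1.
Qed.

Lemma prim_root_sum_expr (z : F) (j j' : 'I_n) : n.-primitive_root z ->
  \sum_(i < n) (z ^+ j / z ^+ j') ^+ i = ((j == j') * n)%:R.
Proof.
move=> z_prim; have zX_neq0 k : z ^+ k != 0.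
  by rewrite expf_neq0 // (prim_root_eq0 z_prim) -lt0n (prim_order_gt0 z_prim).
have [<-|j_neq] := eqVneq j j'.
  rewrite divff // mul1n; under eq_bigr do rewrite expr1n.
  by rewrite sumr_const card_ord.
apply: unity_root_sum_eq0.
  rewrite exprMn exprVn -!exprM !(mulnC _ n) !exprM (prim_expr_order z_prim).
  by rewrite !expr1n invr1 mulr1.
apply: contra j_neq => /eqP/divr1_eq/eqP.
by rewrite (eq_prim_root_expr z_prim) !modn_small.
Qed.

End UnityRoots.

Section CharPoly.
Variable K : comUnitRingType.

Lemma char_poly_similar n (P A B : 'M[K]_n) :
  P \in unitmx -> P *m A = B *m P -> char_poly A = char_poly B.
Proof.
move=> P_unit PA_BP; have -> : A = invmx P *m B *m P by rewrite -mulmxA -PA_BP mulKmx.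
rewrite /char_poly /char_poly_mx.
have -> : 'X%:M - map_mx polyC (invmx P *m B *m P) =
    map_mx polyC (invmx P) *m ('X%:M - map_mx polyC B) *m map_mx polyC P.
  rewrite mulmxBr mulmxBl !map_mxM -!mulmxA; congr (_ - _).
  by rewrite mul_scalar_mx -scalemxAr -map_mxM mulVmx // map_mx1 scalemx1.
by rewrite !det_mulmx mulrC mulrA -det_mulmx -map_mxM mulmxV // map_mx1 det1 mul1r.
Qed.

Lemma char_poly_diag n (d : 'rV[K]_n) : char_poly (diag_mx d) = \prod_i ('X - (d 0 i)%:P).
Proof.
rewrite char_poly_trig ?diag_mx_is_trig //.
by apply: eq_bigr => i _; rewrite mxE eqxx mulr1n.
Qed.

End CharPoly.

Lemma mup_prod_XsubC_fin (T : finType) (F : fieldType) (f : T -> F) a :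
  mup a (\prod_x ('X - (f x)%:P)) = (\sum_x (f x == a))%N.
Proof.
rewrite -(big_map f xpredT (fun y => 'X - y%:P)) mu_prod_XsubC count_map -sum1_count big_mkcond.
by apply: eq_bigr => x _ /=; case: (f x == a).
Qed.

Section EnumMatrix.
Variables (T : finType) (K : pzRingType).

Definition enum_mx (f : T -> T -> K) : 'M[K]_#|T| := \matrix_(a, b) f (enum_val a) (enum_val b).

Lemma enum_mxM f g : enum_mx f *m enum_mx g = enum_mx (fun x y => \sum_z f x z * g z y).
Proof.
apply/matrixP => a b; rewrite mxE [RHS]mxE.
rewrite (big_enum_val (fun z => f (enum_val a) z * g z (enum_val b))).
by apply: eq_bigr => c _; rewrite !mxE.
Qed.

Lemma enum_mx1 : enum_mx (fun x y => (x == y)%:R) = 1%:M.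
Proof. by apply/matrixP => a b; rewrite !mxE (inj_eq enum_val_inj). Qed.

End EnumMatrix.

Section ComplexExponential.
Variable R : realType.

Definition expi (x : R) : R[i] := Complex (cos x) (sin x).

Lemma expiD x y : expi (x + y) = expi x * expi y.
Proof. by rewrite /expi cosD sinD; apply/eqP; rewrite eq_complex /= !eqxx /= addrC. Qed.

Lemma expi0 : expi 0 = 1.
Proof. by rewrite /expi cos0 sin0. Qed.

Lemma expi_2pi : expi (pi *+ 2) = 1.
Proof. by rewrite /expi cos2pi sin2pi. Qed.

Lemma expiMn x k : expi x ^+ k = expi (x *+ k).
Proof.
elim: k => [|k IHk]; first by rewrite expr0 mulr0n expi0.
by rewrite exprS IHk mulrS expiD.
Qed.

Lemma expiN x : expi (- x) = (expi x)^-1.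
Proof. by apply/esym/mulr1_eq; rewrite -expiD subrr expi0. Qed.

Lemma expi_addV x : expi x + (expi x)^-1 = real_complex R (2 * cos x).
Proof.
rewrite -expiN /expi cosN sinN; apply/eqP; rewrite eq_complex /=.
by rewrite subrr mulr2n mulrDl mul1r !eqxx.
Qed.

Lemma cos_lt1 (x : R) : 0 < x < pi *+ 2 -> cos x < 1.
Proof.
move=> /andP[x_gt0 x_lt2pi]; have -> : x = (x / 2) *+ 2 by rewrite -mulr_natr divfK.
rewrite cos_mulr2n cos2sin2.
have : 0 < sin (x / 2) by apply: sin_gt0_pi; apply/andP; split; lra.
by move=> sin_gt0; have := exprn_gt0 2 sin_gt0; lra.
Qed.

End ComplexExponential.

Section Omega.
Variables (R : realType) (m : nat).
Hypothesis m_gt0 : (0 < m)%N.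

Definition theta (j : nat) : R := 2 * pi * j%:R / m%:R.

Definition omega : R[i] := expi (theta 1).

Lemma omegaX j : omega ^+ j = expi (theta j).
Proof. by rewrite /omega expiMn /theta; congr expi; rewrite -mulr_natr; ring. Qed.

Lemma omega_prim : m.-primitive_root omega.
Proof.
have m_neq0 : (m%:R : R) != 0 by rewrite pnatr_eq0 -lt0n.
apply/andP; split => //; apply/forallP => i; apply/eqP; rewrite unity_rootE omegaX.
have [i_lt|i_gt|->] := ltngtP i.+1 m; last 2 first.
- by have := ltn_ord i; lia.
- by rewrite /theta -mulrA divff // mulr1 mulr_natl expi_2pi !eqxx.
apply/negbTE/eqP => -[cos_eq1 _].
have : 0 < theta i.+1 < pi *+ 2.
  have -> : theta i.+1 = pi *+ 2 * (i.+1%:R / m%:R) by rewrite /theta; ring.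
  have r_gt0 : 0 < i.+1%:R / m%:R :> R by rewrite divr_gt0 ?ltr0n.
  have r_lt1 : i.+1%:R / m%:R < 1 :> R by rewrite ltr_pdivrMr ?ltr0n // mul1r ltr_nat.
  by have pi_pos := pi_gt0 R; apply/andP; split; nra.
by move/cos_lt1; rewrite cos_eq1 ltxx.
Qed.

Lemma omegaXm j : (omega ^+ j) ^+ m = 1.
Proof. by rewrite exprAC (prim_expr_order omega_prim) expr1n. Qed.

Lemma omegaX_ordS j (k : 'I_m) : (omega ^+ j) ^+ ordS k = (omega ^+ j) ^+ k * omega ^+ j.
Proof. exact: expr_ordS (omegaXm j). Qed.

Lemma omegaX_ord_pred j (k : 'I_m) : (omega ^+ j) ^+ ord_pred k = (omega ^+ j) ^+ k / omega ^+ j.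
Proof. exact: expr_ord_pred (omegaXm j). Qed.

Lemma omegaX_addV j : omega ^+ j + (omega ^+ j)^-1 = real_complex R (2 * cos (theta j)).
Proof. by rewrite omegaX expi_addV. Qed.

End Omega.

Section Tgraph.
Variable m : nat.
Local Notation T := (Tvert m).

Definition vnext (y : T) : T := let: (t, i, k) := y in (t, i, ordS k).
Definition vprev (y : T) : T := let: (t, i, k) := y in (t, i, ord_pred k).
Definition vflip (y : T) : T := let: (t, i, k) := y in (~~ t, k, i).

Lemma Tadj_neighbours x y : Tadj x y = (x \in [:: vnext y; vprev y; vflip y]).
Proof.
have ordS_eqL (b k : 'I_m) : ((b.+1 %% m)%N == k :> nat) = (b == ord_pred k).
  by rewrite -(can2_eq (@ordSK m) (@ord_predK m)).
have ordS_eqR (b k : 'I_m) : ((k.+1 %% m)%N == b :> nat) = (b == ordS k).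
  by rewrite eq_sym -val_eqE.
case: x => [[s a] b]; case: y => [[t i k]]; rewrite /= ordS_eqL ordS_eqR !inE !xpair_eqE.
by case: s; case: t => /=; rewrite ?andbF ?orbF //= -?andb_orr 1?orbC //
  andbC (eq_sym k) (eq_sym i).
Qed.

Lemma ordS_neq_ord_pred (k : 'I_m) : (2 < m)%N -> ordS k != ord_pred k.
Proof.
move=> m_gt2; rewrite -val_eqE /=.
have -> : (k + m).-1 = (k + m.-1)%N by lia.
by rewrite -addn1 eqn_modDl !modn_small; lia.
Qed.

Lemma sum_Tadj (V : nmodType) (f : T -> V) y : (2 < m)%N ->
  \sum_x f x *+ Tadj x y = f (vnext y) + f (vprev y) + f (vflip y).
Proof.
move=> m_gt2; have nb_uniq : uniq [:: vnext y; vprev y; vflip y].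
  case: y => [[t i k]]; rewrite /= !inE !xpair_eqE (negPf (ordS_neq_ord_pred k m_gt2)).
  by case: t; rewrite /= andbF.
rewrite (eq_bigr (fun x => if x \in [:: vnext y; vprev y; vflip y] then f x else 0)).
  by rewrite -big_mkcond -big_uniq //= !big_cons big_nil addr0 addrA.
by move=> x _; rewrite Tadj_neighbours mulrb.
Qed.

Lemma big_Tvert (V : Type) (idx : V) (op : Monoid.com_law idx) (F : T -> V) :
  \big[op/idx]_x F x =
  \big[op/idx]_(t : bool) \big[op/idx]_(i : 'I_m) \big[op/idx]_(k : 'I_m) F (t, i, k).
Proof. by rewrite [RHS]pair_bigA [RHS]pair_bigA; apply: eq_bigr => -[[t i] k]. Qed.

End Tgraph.

Section PairRoots.
Variables (R : rcfType) (x y : R).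

Definition pair_root (s : bool) : R :=
  (x + y + (if s then 1 else -1) * Num.sqrt ((x - y) ^+ 2 + 4)) / 2.

Let sqrt_sqr : Num.sqrt ((x - y) ^+ 2 + 4) ^+ 2 = (x - y) ^+ 2 + 4.
Proof. by rewrite sqr_sqrtr // addr_ge0 ?sqr_ge0. Qed.

Let sqrt_gt0 : 0 < Num.sqrt ((x - y) ^+ 2 + 4).
Proof. by rewrite sqrtr_gt0 ltr_wpDl ?sqr_ge0. Qed.

Lemma pair_rootP s : (pair_root s - x) * (pair_root s - y) = 1.
Proof.
rewrite /pair_root; transitivity ((Num.sqrt ((x - y) ^+ 2 + 4) ^+ 2 - (x - y) ^+ 2) / 4).
  by case: s; field.
by rewrite sqrt_sqr; field.
Qed.

Lemma pair_root_neq : pair_root true - x != pair_root false - x.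
Proof. by have := sqrt_gt0; rewrite /pair_root; set r := Num.sqrt _ => r_gt0; apply/eqP; lra. Qed.

Lemma pair_root_count_eq1 :
  ((pair_root true == 1%R) + (pair_root false == 1%R))%N = (x * y == x + y).
Proof.
have := sqrt_gt0; rewrite /pair_root; set r := Num.sqrt _ => r_gt0.
have -> : (x * y == x + y) = (r ^+ 2 == (x + y - 2) ^+ 2).
  by rewrite sqrt_sqr; apply/eqP/eqP => eq_xy; nra.
have -> : ((x + y + 1 * r) / 2 == 1) = (r == - (x + y - 2)) by apply/eqP/eqP => ?; lra.
have -> : ((x + y + -1 * r) / 2 == 1) = (r == x + y - 2) by apply/eqP/eqP => ?; lra.
rewrite eqf_sqr orbC; have [r_eq|_] := eqVneq r (x + y - 2); last by case: (r == _).
by rewrite orbT; case: eqP => // ?; exfalso; lra.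
Qed.

End PairRoots.

Section MixInverse.
Variable F : fieldType.

(* [mix_inv bp bm t s] is the (t, s) entry of the inverse of the matrix with rows (1, bp) and
   (1, bm). *)
Definition mix_inv (bp bm : F) (t s : bool) : F :=
  (if t then (if s then bm else - bp) else (if s then -1 else 1)) / (bm - bp).

Lemma mix_invP bp bm s s' : bp != bm ->
  mix_inv bp bm true s' + (if s then bp else bm) * mix_inv bp bm false s' = (s == s')%:R.
Proof.
move=> bp_neq_bm; have d_neq0 : bm - bp != 0 by rewrite subr_eq0 eq_sym.
by rewrite /mix_inv; case: s; case: s' => /=; field.
Qed.

End MixInverse.

Section Spectrum.
Variables (R : realType) (m : nat).
Hypothesis m_gt2 : (2 < m)%N.
Let m_gt0 : (0 < m)%N := ltnW (ltnW m_gt2).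
Local Notation C := R[i].
Local Notation T := (Tvert m).
Local Notation rc := (real_complex R).
Local Notation omega := (omega R m).

Definition cycle_eig (j : nat) : R := 2 * cos (theta R m j).

Definition Teig (e : T) : R := let: (s, j, l) := e in pair_root (cycle_eig l) (cycle_eig j) s.

Definition Tweight (e : T) : R := let: (_, _, l) := e in Teig e - cycle_eig l.

Arguments Teig : simpl never.
Arguments Tweight : simpl never.

(* On the x^- half the two coordinates are swapped, matching the edges x^+_{i,k} -- x^-_{k,i}. *)
Definition mode (z : C) (j l : nat) (x : T) : C :=
  let: (t, i, k) := x in
  if t then (z ^+ j) ^+ i * (z ^+ l) ^+ k else (z ^+ j) ^+ k * (z ^+ l) ^+ i.
Arguments mode : simpl never.

Definition Teigvec (e x : T) : C :=
  let: (_, j, l) := e in let: (t, _, _) := x in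
  (if t then 1 else rc (Tweight e)) * mode omega j l x.

Definition Teigvec_inv (x e : T) : C :=
  let: (t, _, _) := x in let: (s, j, l) := e in
  rc (mix_inv (Tweight (true, j, l)) (Tweight (false, j, l)) t s)
    * mode omega^-1 j l x / m%:R ^+ 2.

Lemma Teigvec_adj e y :
  \sum_x Teigvec e x *+ Tadj x y = rc (Teig e) * Teigvec e y.
Proof.
case: e => [[s j l]]; case: y => [[t i k]]; rewrite sum_Tadj //= /mode /Tweight /Teig /=.
rewrite !omegaX_ordS ?omegaX_ord_pred //.
have quad := pair_rootP (cycle_eig l) (cycle_eig j) s.
set lam := pair_root _ _ s in quad *; set b := lam - cycle_eig l in quad *.
case: t => /=.
  transitivity (omega ^+ j ^+ i * omega ^+ l ^+ k * (omega ^+ l + (omega ^+ l)^-1 + rc b)).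
    by ring.
  by rewrite omegaX_addV -rmorphD /b addrC subrK; ring.
transitivity (omega ^+ j ^+ k * omega ^+ l ^+ i * (rc b * (omega ^+ j + (omega ^+ j)^-1) + 1)).
  by ring.
have b_shift : b * cycle_eig j + 1 = lam * b by rewrite -quad; ring.
by rewrite omegaX_addV -rmorphM -(rmorph1 rc) -rmorphD b_shift rmorphM; ring.
Qed.

Lemma mode_orthogonal (t : bool) (j l j' l' : 'I_m) :
  \sum_(i < m) \sum_(k < m) mode omega j l (t, i, k) * mode omega^-1 j' l' (t, i, k) =
  ((j == j') && (l == l'))%:R * m%:R ^+ 2.
Proof.
have geo_sum (a b : 'I_m) : \sum_(i < m) (omega ^+ a / omega ^+ b) ^+ i = ((a == b) * m)%:R.
  exact: prim_root_sum_expr (omega_prim R m_gt0).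
have -> : ((j == j') && (l == l'))%:R * m%:R ^+ 2 =
    (\sum_(i < m) (omega ^+ j / omega ^+ j') ^+ i) *
    (\sum_(k < m) (omega ^+ l / omega ^+ l') ^+ k).
  rewrite !geo_sum -natrX -!natrM; congr _%:R.
  by case: (j == j'); case: (l == l'); rewrite /= ?mul1n ?mul0n ?muln0 ?mulnn.
case: t; last rewrite [RHS]mulrC.
all: rewrite mulr_suml; apply: eq_bigr => i _; rewrite mulr_sumr; apply: eq_bigr => k _.
all: by rewrite /mode /= !exprMn !exprVn; ring.
Qed.

Lemma Teigvec_mulV : enum_mx Teigvec *m enum_mx Teigvec_inv = 1%:M.
Proof.
rewrite enum_mxM -enum_mx1; congr enum_mx.
apply/funext => -[[s j l]]; apply/funext => -[[s' j' l']].
have m2_neq0 : m%:R ^+ 2 != 0 :> C by rewrite expf_neq0 // pnatr_eq0 -lt0n.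
have sum_factor (a b : C) (F G : 'I_m -> 'I_m -> C) :
    \sum_i \sum_k (a * F i k) * (b * G i k / m%:R ^+ 2) =
    a * b / m%:R ^+ 2 * \sum_i \sum_k F i k * G i k.
  by rewrite mulr_sumr; apply: eq_bigr => i _; rewrite mulr_sumr; apply: eq_bigr => k _; ring.
rewrite big_Tvert big_bool /= !sum_factor !mode_orthogonal !xpair_eqE.
have [<-|_] := eqVneq j j'; last by rewrite !mul0r !mulr0 addr0 andbF.
have [<-|_] := eqVneq l l'; last by rewrite !mul0r !mulr0 addr0 andbF.
have cancel_m2 (a : C) : a / m%:R ^+ 2 * (true%:R * m%:R ^+ 2) = a by rewrite mul1r divfK.
rewrite !andbT !cancel_m2 mul1r -rmorphM -rmorphD.
have -> : Tweight (s, j, l) = if s then Tweight (true, j, l) else Tweight (false, j, l) by case: s.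
by rewrite mix_invP ?rmorph_nat //; exact: pair_root_neq.
Qed.

Lemma Teigvec_Tadjmx :
  enum_mx Teigvec *m map_mx rc (Tadjmx R m) =
  diag_mx (\row_e rc (Teig (enum_val e))) *m enum_mx Teigvec.
Proof.
apply/matrixP => a b; rewrite mul_diag_mx !mxE -Teigvec_adj.
rewrite (big_enum_val (fun x => Teigvec (enum_val a) x *+ Tadj x (enum_val b))).
by apply: eq_bigr => c _; rewrite !mxE rmorph_nat mulr_natr.
Qed.

Lemma char_poly_Tadjmx : char_poly (Tadjmx R m) = \prod_x ('X - (Teig x)%:P).
Proof.
have [Teigvec_unit _] := mulmx1_unit Teigvec_mulV.
apply: (@map_poly_inj _ _ rc); rewrite map_char_poly rmorph_prod.
rewrite (char_poly_similar Teigvec_unit Teigvec_Tadjmx) char_poly_diag.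
rewrite (big_enum_val (fun x => map_poly rc ('X - (Teig x)%:P))).
by apply: eq_bigr => e _; rewrite map_polyXsubC mxE.
Qed.

Lemma Teig_count_eq1 (j l : 'I_m) :
  ((Teig (true, j, l) == 1%R) + (Teig (false, j, l) == 1%R))%N =
  (cos (theta R m j) + cos (theta R m l) == 2 * cos (theta R m j) * cos (theta R m l)).
Proof.
rewrite pair_root_count_eq1 /cycle_eig; congr (nat_of_bool _).
by apply/eqP/eqP => ?; nra.
Qed.

End Spectrum.

Theorem corollary6p10 (R : realType) (m : nat) (hm : (3 <= m)%N) :
  eig_mult (Tadjmx R m) 1 =
  #|[set p : 'I_m * 'I_m |
      cos (2 * pi * (p.1 : nat)%:R / m%:R : R) + cos (2 * pi * (p.2 : nat)%:R / m%:R : R)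
      == 2 * cos (2 * pi * (p.1 : nat)%:R / m%:R : R) * cos (2 * pi * (p.2 : nat)%:R / m%:R : R)]|.
Proof.
rewrite /eig_mult char_poly_Tadjmx // mup_prod_XsubC_fin big_Tvert big_bool.
rewrite !pair_bigA -big_split -sum1_card [RHS]big_mkcond.
apply: eq_bigr => -[j l] _; rewrite inE /= Teig_count_eq1.
by case: (_ == _).
Qed.
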